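(* Let $A$ be a brick gentle algebra. For any label $w_{\mathcal D}\in\mathcal S$, the string module $M(\mathrm{str}(w_{\mathcal D}))\in\mathcal M$ is a brick as a $\Pi(A)$-module, i.e. $\mathrm{End}_{\Pi(A)}(M(\mathrm{str}(w_{\mathcal D})))=k$.
   Context: Setting: $k$ a field, $A=kQ/I$, $Q$ finite connected quiver, $I$ admissible generated by paths (paths composed right to left). Gentle: (S1) each vertex has at most two incoming and two outgoing arrows; (S2) for each arrow $\alpha$ at most one $\beta$ with $\alpha\beta$ a path not in $I$ and at most one $\gamma$ with $\gamma\alpha$ a path not in $I$; (G1) $I$ generated by paths of length two; (G2) for each arrow $\alpha$ at most one $\beta$ with $\alpha\beta$ a path in $I$ and at most one $\gamma$ with $\gamma\alpha$ a path in $I$. Brick gentle: moreover every indecomposable module has endomorphism ring a division ring. Strings (for any $k\Gamma/J$, $J$ generated by paths): words $w=\gamma_d^{\epsilon_d}\cdots\gamma_1^{\epsilon_1}$ in arrows and formal inverses ($s(\gamma^{-1})=t(\gamma)$, $t(\gamma^{-1})=s(\gamma)$), consecutive letters composable, no $\gamma\gamma^{-1}$ or $\gamma^{-1}\gamma$, neither $w$ nor $w^{-1}$ containing a subword which is a path in $J$; plus length-zero strings; $w\sim w^{-1}$. String module $M(w)$: basis $b_1,\dots,b_{d+1}$, $b_j$ at vertex $x_j$ where $x_1=s(\gamma_1^{\epsilon_1})$, $x_{i+1}=t(\gamma_i^{\epsilon_i})$; $\gamma_i$ sends $b_i\mapsto b_{i+1}$ if $\epsilon_i=1$, $b_{i+1}\mapsto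 b_i$ if $\epsilon_i=-1$; other arrow actions on basis vectors are zero. For $w=\gamma_d^{\epsilon_d}\cdots\gamma_1^{\epsilon_1}\in\mathrm{Str}(A)$ and $1\le j\le d$, $w=w_1\gamma_j^{\epsilon_j}w_2$ gives a break $\{w_1,w_2\}$, with $w_1,w_2$ splits. Labels: $\mathcal S$ = pairs $w_{\mathcal D}=(w,\mathcal D)$, $w\in\mathrm{Str}(A)$ of length $d$, $\mathcal D$ a set of $d$ splits of $w$ no two from the same break (so exactly one from each break), modulo $(w,\mathcal D)\sim(w^{-1},\mathcal D^{-1})$. $\Pi(A)=k\overline Q/\overline I$, where $\overline Q$ adds an arrow $\gamma^*:t(\gamma)\to s(\gamma)$ for each $\gamma\in Q_1$ and $\overline I$ is generated by $\beta\alpha,\alpha^*\beta^*$ for paths $\beta\alpha\in I$ of length two. A string of $\Pi(A)$ specializes to the word obtained by replacing $\gamma^*$ by $\gamma^{-1}$ and $(\gamma^* )^{-1}$ by $\gamma$; $\mathcal M$ is the additive closure in $\mathrm{mod}(\Pi(A))$ of the string modules of strings of $\Pi(A)$ specializing to strings of $A$. The map $\mathrm{str}$: for $w_{\mathcal D}$ with $w=\gamma_d^{\epsilon_d}\cdots\gamma_1^{\epsilon_1}$, $\mathrm{str}(w_{\mathcal D})$ is the word obtained by replacing the $i$-th letter as follows: if $w=u\gamma_iw'$ with $w'\in\mathcal D$, use $\gamma_i$; if $w=u\gamma_i^{-1}w'$ with $w'\in\mathcal D$, use $\gamma_i^*$; if $w=w'\gamma_i^{-1}u$ with $w'\in\mathcal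 D$, use $\gamma_i^{-1}$; if $w=w'\gamma_iu$ with $w'\in\mathcal D$, use $(\gamma_i^* )^{-1}$ (here $u$ is a possibly empty string). This is a string of $\Pi(A)$ specializing to $w$. *)

From mathcomp Require Import all_boot all_order all_algebra.
Set Implicit Arguments. Unset Strict Implicit. Unset Printing Implicit Defensive.
Import GRing.Theory.
Local Open Scope ring_scope.

(* A set of relations of length two is given by R : Ar -> Ar -> bool,
   with  R b a  meaning that the path  b a  (first a, then b) lies in I.
   Letters are pairs (a, true) = a  and (a, false) = a^{-1}. *)

Section Quiver.
Variables (V Ar : finType) (s t : Ar -> V) (R : Ar -> Ar -> bool).

(* p = [:: a1; a2; ...; an] is the path an ... a2 a1 (a1 first) *)
Definition is_qpath (p : seq Ar) : bool :=
  sorted (fun a b => t a == s b) p.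

Definition path_in_I (p : seq Ar) : bool :=
  is_qpath p && has (fun ab : Ar * Ar => R ab.2 ab.1) (zip p (behead p)).

Definition connected_quiver : Prop :=
  forall x y : V,
    connect (fun u v => [exists a, ((s a == u) && (t a == v)) ||
                                  ((s a == v) && (t a == u))]) x y.

(* I is admissible (it is generated by the length-two paths R, so it is
   contained in the square of the arrow ideal); moreover some power of the
   arrow ideal lies in I. *)
Definition admissible_rel : Prop :=
  (forall b a, R b a -> t a = s b) /\
  exists N : nat, forall p : seq Ar, size p = N -> is_qpath p -> path_in_I p.

Definition gentle : Prop :=
  [/\ connected_quiver,
      admissible_rel,
      (forall x : V, #|[set a | t a == x]| <= 2 /\ #|[set a | s a == x]| <= 2)%N,
      (forall a : Ar,
         #|[set b | (t b == s a) && ~~ R a b]| <= 1 /\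
         #|[set c | (s c == t a) && ~~ R c a]| <= 1)%N
    & (* (G2) ; (G1) is built in: I is generated by the length-two paths R *)
      (forall a : Ar,
         #|[set b | (t b == s a) && R a b]| <= 1 /\
         #|[set c | (s c == t a) && R c a]| <= 1)%N].

Definition lsrc (l : Ar * bool) : V := if l.2 then s l.1 else t l.1.
Definition ltgt (l : Ar * bool) : V := if l.2 then t l.1 else s l.1.

Definition ok_pair (l1 l2 : Ar * bool) : bool :=
  [&& ltgt l1 == lsrc l2,
      ~~ ((l1.1 == l2.1) && (l1.2 != l2.2)),
      ~~ [&& l1.2, l2.2 & R l2.1 l1.1]   (* no subword gamma_{i+1} gamma_i in I *)
    & ~~ [&& ~~ l1.2, ~~ l2.2 & R l1.1 l2.1]]. (* no such subword of w^{-1} *)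

(* A string is given by its starting vertex x0 and its list of letters
   w = [:: gamma_1^{e_1}; ...; gamma_d^{e_d}] (the word gamma_d^{e_d}...gamma_1^{e_1});
   w = [::] gives the length-zero string at x0. *)
Definition isString (x0 : V) (w : seq (Ar * bool)) : bool :=
  (if w is l :: _ then lsrc l == x0 else true) && sorted ok_pair w.

(* vertex x_{j+1} of the basis vector b_{j+1} (0-indexed j) *)
Definition svert (x0 : V) (w : seq (Ar * bool)) (j : nat) : V :=
  nth x0 (x0 :: map ltgt w) j.

End Quiver.

(* A finite-dimensional module over kQ/I (Q = (V,Ar,s,t), I generated by R)
   on the space k^n (row vectors): complete set of orthogonal idempotents
   e v and arrow actions act a : k^n -> k^n, x |-> x *m act a. *)
Section Modules.
Variables (k : fieldType) (V Ar : finType) (s t : Ar -> V) (R : Ar -> Ar -> bool).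

Definition isRep (n : nat) (e : V -> 'M[k]_n) (act : Ar -> 'M[k]_n) : Prop :=
  [/\ (forall v, e v *m e v = e v),
      (forall u v, u != v -> e u *m e v = 0),
      \sum_v e v = 1%:M,
      (forall a, e (s a) *m act a *m e (t a) = act a)
    & (forall b a, R b a -> act a *m act b = 0)].

Definition isEndo (n : nat) (e : V -> 'M[k]_n) (act : Ar -> 'M[k]_n)
    (f : 'M[k]_n) : Prop :=
  (forall v, e v *m f = f *m e v) /\ (forall a, act a *m f = f *m act a).

Definition indecomposable n (e : V -> 'M[k]_n) (act : Ar -> 'M[k]_n) : Prop :=
  (0 < n)%N /\
  forall f, isEndo e act f -> f *m f = f -> f = 0 \/ f = 1%:M.

Definition End_division n (e : V -> 'M[k]_n) (act : Ar -> 'M[k]_n) : Prop :=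
  forall f, isEndo e act f -> f != 0 ->
    exists g, [/\ isEndo e act g, f *m g = 1%:M & g *m f = 1%:M].

Definition isBrick n (e : V -> 'M[k]_n) (act : Ar -> 'M[k]_n) : Prop :=
  forall f, isEndo e act f -> exists c : k, f = c%:M.

Definition brick_gentle : Prop :=
  gentle s t R /\
  forall n (e : V -> 'M[k]_n) (act : Ar -> 'M[k]_n),
    isRep e act -> indecomposable e act -> End_division e act.

(* string module M(w) of a string (x0, w): basis b_1..b_{d+1} = rows 0..d *)
Definition smod_e (x0 : V) (w : seq (Ar * bool)) (v : V) : 'M[k]_((size w).+1) :=
  \matrix_(i, j) ((i == j) && (svert s t x0 w i == v))%:R.

Definition smod_act (x0 : V) (w : seq (Ar * bool)) (a : Ar) : 'M[k]_((size w).+1) :=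
  \matrix_(i, j)
    ((((j : nat) == i.+1) && (nth (a, true) w i == (a, true))) ||
     (((i : nat) == j.+1) && (nth (a, true) w j == (a, false))))%:R.

End Modules.

Section PiA.
Variables (V Ar : finType) (s t : Ar -> V) (R : Ar -> Ar -> bool).

(* arrows of Qbar: inl a = a, inr a = a^* : t a -> s a *)
Definition piS (x : Ar + Ar) : V := match x with inl a => s a | inr a => t a end.
Definition piT (x : Ar + Ar) : V := match x with inl a => t a | inr a => s a end.
(* Ibar generated by  b a  and  a^* b^*  for  b a in I *)
Definition piR (y x : Ar + Ar) : bool :=
  match y, x with
  | inl b, inl a => R b a
  | inr a, inr b => R b a
  | _, _ => false
  end.

Definition specialize (l : (Ar + Ar) * bool) : Ar * bool :=
  match l.1 with inl a => (a, l.2) | inr a => (a, ~~ l.2) end.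

(* The label (w, D): D is a tuple with one entry per break; the i-th entry
   (0-indexed) concerns the break at letter gamma_{i+1}:
   true  = the split w' with w = u gamma_{i+1}^{e} w' (the letters before it) is in D,
   false = the split w' with w = w' gamma_{i+1}^{e} u (the letters after it) is in D. *)
Definition str_letter (l : Ar * bool) (r : bool) : (Ar + Ar) * bool :=
  (if l.2 == r then inl l.1 else inr l.1, r).

Definition str (w : seq (Ar * bool)) (D : (size w).-tuple bool) :=
  [seq str_letter p.1 p.2 | p <- zip w D].

End PiA.

(* Endomorphisms of a string module are rigid: they vanish between basis vectors lying at
   different vertices, and commuting with the arrows makes them invariant under a shift of
   both indices along equal letters, so in particular their diagonal is constant.  Hence
   M(str w_D) is a brick as soon as the vertices x_1, ..., x_(d+1) of w are pairwise
   distinct, and this holds in a brick gentle algebra A.  Otherwise a shortest repetition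
   is a closed string c with distinct vertices; continuing c by its first m letters
   (m = 0 or m = |c| - 1) gives a string whose module is indecomposable but carries the
   nonzero square-zero endomorphism b_i |-> b_(i+|c|), so its endomorphism ring is not a
   division ring.  If the last letter of c is inverse, one argues in the opposite quiver,
   where string modules are transposed. *)

From mathcomp Require Import all_boot all_order all_algebra.
From mathcomp Require Import zify.
Set Implicit Arguments. Unset Strict Implicit. Unset Printing Implicit Defensive.
Import GRing.Theory.

Definition inv_letter {Ar : Type} (l : Ar * bool) : Ar * bool := (l.1, ~~ l.2).

Lemma inv_letterK (Ar : Type) : involutive (@inv_letter Ar).
Proof. by case=> a e; rewrite /inv_letter negbK. Qed.

Lemma inv_letter_eq (Ar : eqType) (l l' : Ar * bool) :
  (inv_letter l == l') = (l == inv_letter l').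
Proof. by apply/eqP/eqP => [<-|->]; rewrite inv_letterK. Qed.

Lemma inv_letter_neq (Ar : eqType) (l : Ar * bool) : l != inv_letter l.
Proof. by case: l => a []; rewrite /inv_letter xpair_eqE eqxx. Qed.

Lemma nth_letter_dir (Ar : Type) (w : seq (Ar * bool)) a b e e' i :
  nth (a, true) w i = (a, e) -> nth (b, true) w i = (b, e') -> e = e'.
Proof.
case: (ltnP i (size w)) => [lt_i|ge_i]; last by rewrite !nth_default // => -[<-] [<-].
by rewrite (set_nth_default (a, true)) // => -> [_ <-].
Qed.

Section Strings.
Variables (V Ar : finType) (s t : Ar -> V) (R : Ar -> Ar -> bool).
Implicit Types (w : seq (Ar * bool)) (l : Ar * bool) (y : V).

Lemma ok_pair_neq_inv l1 l2 : ok_pair s t R l1 l2 -> l2 != inv_letter l1.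
Proof.
case/and4P => _ + _ _; apply: contra => /eqP ->.
by rewrite /inv_letter /= eqxx; case: (l1.2).
Qed.

Lemma string_ok_pair y w p (x : Ar * bool) : isString s t R y w -> p.+1 < size w ->
  ok_pair s t R (nth x w p) (nth x w p.+1).
Proof. by case/andP=> _; case: w => [|l w] //= /(pathP x); apply. Qed.

Lemma string_nth_neq_inv y w p (x : Ar * bool) : isString s t R y w -> p.+1 < size w ->
  nth x w p.+1 != inv_letter (nth x w p).
Proof. by move=> ws lt_p; apply/ok_pair_neq_inv/(string_ok_pair x ws). Qed.

Lemma svert_succ y w p (x : Ar * bool) : p < size w -> svert s t y w p.+1 = ltgt s t (nth x w p).
Proof. by move=> lt_p; rewrite /svert /= (nth_map x). Qed.

Lemma svert_string y w p (x : Ar * bool) : isString s t R y w -> p < size w ->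
  svert s t y w p = lsrc s t (nth x w p).
Proof.
case: p => [|p] ws lt_p.
  by case/andP: ws; case: w lt_p => [|l w] //= _ /eqP ->.
by rewrite (svert_succ _ x) 1?ltnW //; case/and4P: (string_ok_pair x ws lt_p) => /eqP.
Qed.

Lemma svert_cat y w1 w2 p : p <= size w1 ->
  svert s t y (w1 ++ w2) p = svert s t y w1 p.
Proof. by move=> le_p; rewrite /svert map_cat -cat_cons nth_cat /= size_map ltnS le_p. Qed.

Lemma svert_catr y w1 w2 p : p <= size w2 ->
  svert s t y (w1 ++ w2) (size w1 + p) =
  svert s t (svert s t y w1 (size w1)) w2 p.
Proof.
case: p => [|p] le_p; first by rewrite addn0 svert_cat.
rewrite addnS /svert /= map_cat nth_cat size_map ltnNge leq_addr /= addKn.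
by apply: set_nth_default; rewrite size_map.
Qed.

Lemma svert_take y w m p : p <= m -> svert s t y (take m w) p = svert s t y w p.
Proof. by case: p => [|p] le_p //; rewrite /svert /= map_take nth_take. Qed.

Lemma svert_drop y w p r : p + r <= size w ->
  svert s t (svert s t y w p) (drop p w) r = svert s t y w (p + r).
Proof.
move=> le_pr; have le_p : p <= size w by apply: leq_trans le_pr; apply: leq_addr.
have size_tk : size (take p w) = p by rewrite size_takel.
have := @svert_catr y (take p w) (drop p w) r.
by rewrite cat_take_drop size_tk svert_take // size_drop leq_subRL // => ->.
Qed.

Lemma isString_take y w m : isString s t R y w -> isString s t R y (take m w).
Proof.
rewrite /isString; case: w m => [|l w] [|m] //= /andP[-> pw] /=.
by move: pw; rewrite -{1}(cat_take_drop m w) cat_path => /andP[].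
Qed.

Lemma isString_drop y w p : isString s t R y w -> p <= size w ->
  isString s t R (svert s t y w p) (drop p w).
Proof.
move=> ws le_p; apply/andP; split; last by apply: drop_sorted; case/andP: ws.
case: (ltnP p (size w)) => [lt_p|]; last by move/drop_oversize ->.
have x : Ar * bool by case: (w) lt_p => [|x w'].
by rewrite (drop_nth x) // (svert_string x ws lt_p).
Qed.

Lemma ltgt_inv_letter l : ltgt s t (inv_letter l) = lsrc s t l.
Proof. by case: l => ? []. Qed.

Lemma string_before_direct y w p a : isString s t R y w -> p < size w ->
  nth (a, true) w p = (a, true) ->
  (0 < p) && (nth (a, true) w p.-1 == (a, false)) = false.
Proof.
case: p => [|p] //= ws lt_p wp.
by apply: contraNF (string_nth_neq_inv (a, true) ws lt_p); rewrite wp => /eqP ->.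
Qed.

Lemma string_after_direct y w p a : isString s t R y w ->
  nth (a, true) w p = (a, true) ->
  (p.+1 < size w) && (nth (a, true) w p.+1 == (a, false)) = false.
Proof.
move=> ws wp; apply/negbTE/nandP; case: (ltnP p.+1 (size w)) => [lt_p|]; [right | by left].
by have := string_nth_neq_inv (a, true) ws lt_p; rewrite wp.
Qed.

Lemma closed_string_ninv y c (z : Ar * bool) :
  isString s t R y c -> {in [pred p | p < size c] &, injective (svert s t y c)} ->
  0 < size c -> nth z c 0 != inv_letter (nth z c (size c).-1).
Proof.
move=> cs svert_inj c_gt0; case: (ltngtP (size c) 2) => [lt_c2|gt_c2|eq_c2].
- have -> : (size c).-1 = 0 by lia.
  exact: inv_letter_neq.
- apply/negP => /eqP eq_inv.
  have lt_last : (size c).-1 < size c by lia.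
  suff /svert_inj : svert s t y c 1 = svert s t y c (size c).-1 by rewrite !inE; lia.
  by rewrite (svert_succ _ z) // eq_inv ltgt_inv_letter (svert_string z cs).
- have := string_nth_neq_inv z cs (p := 0); rewrite eq_c2 -inv_letter_eq eq_sym; exact.
Qed.

Lemma ok_pair_dir_neq l1 l2 :
  ltgt s t l1 = lsrc s t l2 -> l2 != inv_letter l1 -> l1.2 != l2.2 -> ok_pair s t R l1 l2.
Proof.
move=> eq_v ninv; rewrite /ok_pair eq_v eqxx /=; move: ninv.
case: l1 {eq_v} => a1 e1; case: l2 => a2 e2; rewrite /inv_letter /= xpair_eqE.
by case: e1; case: e2; rewrite ?andbF ?andbT // eq_sym => ->.
Qed.

Lemma isString_cat_take y c m (z : Ar * bool) :
  isString s t R y c -> m < size c ->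
  m = 0 \/ ok_pair s t R (nth z c (size c).-1) (nth z c 0) ->
  isString s t R y (c ++ take m c).
Proof.
case: c => [|l c] //; rewrite /isString /= => /andP[-> pc] lt_m.
case: m lt_m => [_ _|m lt_m [//|ok_last]]; first by rewrite take0 cats0 pc.
rewrite cat_path pc (last_nth l) /= (set_nth_default z) // ok_last /=.
by move: pc; rewrite -{1}(cat_take_drop m c) cat_path => /andP[].
Qed.

Lemma lsrc_opposite l : lsrc t s (inv_letter l) = lsrc s t l.
Proof. by case: l => ? []. Qed.

Lemma ltgt_opposite l : ltgt t s (inv_letter l) = ltgt s t l.
Proof. by case: l => ? []. Qed.

Lemma svert_inv_letters y w p :
  svert t s y (map inv_letter w) p = svert s t y w p.
Proof.
rewrite /svert -map_comp; congr (nth _ (_ :: _) _).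
by apply: eq_map => l /=; rewrite ltgt_opposite.
Qed.

Lemma ok_pair_inv_letter l1 l2 : ok_pair s t R l1 l2 ->
  ok_pair t s (fun b a => R a b) (inv_letter l1) (inv_letter l2).
Proof.
rewrite /ok_pair lsrc_opposite ltgt_opposite /= !negbK.
by case/and4P=> -> ninv r1 r2; rewrite r1 r2 !andbT; case: (l1.2) (l2.2) ninv => [] [].
Qed.

Lemma isString_inv_letters y w : isString s t R y w ->
  isString t s (fun b a => R a b) y (map inv_letter w).
Proof.
rewrite /isString; case: w => [|l w] //= /andP[src pw].
rewrite lsrc_opposite src /=.
by rewrite path_map; apply: sub_path pw => ? ?; apply: ok_pair_inv_letter.
Qed.

End Strings.

Section MatrixFacts.
Variable K : fieldType.
Local Open Scope ring_scope.

Lemma sum_natr_single n (P : pred nat) c (F : 'I_n.+1 -> K) :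
  (forall m, P m -> m = c) ->
  \sum_(m < n.+1) (P m)%:R * F m = ((c <= n)%N && P c)%:R * F (inord c).
Proof.
move=> Pc; rewrite (eq_bigr (fun m : 'I_n.+1 => if P m then F m else 0)); last first.
  by move=> m _; case: (P m); rewrite ?mul1r ?mul0r.
rewrite -big_mkcond (eq_bigl (fun m : 'I_n.+1 => P c && (m == c :> nat))); last first.
  by move=> m /=; apply/idP/andP => [Pm | [Pc' /eqP ->//]]; rewrite -(Pc _ Pm) Pm.
rewrite (eq_bigr (fun m : 'I_n.+1 => F (inord m))) => [|m _]; last by rewrite inord_val.
rewrite (big_ord1_cond_eq _ (fun m => F (inord m)) (fun _ => P c)) ltnS.
by case: ifP; rewrite ?mul1r ?mul0r.
Qed.

Lemma natr_orb (b1 b2 : bool) : ~~ (b1 && b2) -> (b1 || b2)%:R = b1%:R + b2%:R :> K.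
Proof. by case: b1; case: b2; rewrite ?addr0 ?add0r. Qed.

Lemma idem_scalar_add_sqr0 n (S : 'M[K]_n) a b :
  S *m S = 0 -> S != 0 ->
  (a%:M + b *: S) *m (a%:M + b *: S) = a%:M + b *: S -> b = 0 /\ (a = 0 \/ a = 1).
Proof.
move=> SS S_neq0.
have indep x y : x%:M + y *: S = 0 -> x = 0 /\ y = 0.
  move=> E; have /eqP : (x%:M + y *: S) *m S = 0 by rewrite E mul0mx.
  rewrite mulmxDl mul_scalar_mx -scalemxAl SS scaler0 addr0 scaler_eq0 (negbTE S_neq0) orbF.
  move=> /eqP x0; split=> //; apply/eqP.
  by move: E; rewrite x0 raddf0 add0r => /eqP; rewrite scaler_eq0 (negbTE S_neq0) orbF.
have sq : (a%:M + b *: S) *m (a%:M + b *: S) = (a * a)%:M + (a * b + a * b) *: S.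
  rewrite mulmxDl !mulmxDr !mul_scalar_mx mul_mx_scalar -scalemxAl -scalemxAr SS.
  by rewrite !scaler0 addr0 scale_scalar_mx !scalerA -addrA -scalerDl.
rewrite sq => /eqP; rewrite -subr_eq0 opprD addrACA -raddfB -scalerBl => /eqP.
case/indep => /eqP aa /eqP ab.
have : a * (a - 1) == 0 by rewrite mulrBr mulr1.
rewrite mulf_eq0 subr_eq0 => /orP[]/eqP a01; move: ab; rewrite a01.
  by rewrite mul0r addr0 sub0r oppr_eq0 => /eqP; split=> //; left.
by rewrite mul1r addrK => /eqP; split=> //; right.
Qed.

Variables (V Ar : finType).

Lemma isEndo_tr n (e e' : V -> 'M[K]_n) (act act' : Ar -> 'M[K]_n) f :
  (forall v, (e v)^T = e' v) -> (forall a, (act a)^T = act' a) ->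
  isEndo e act f -> isEndo e' act' f^T.
Proof.
move=> tr_e tr_act [comm_e comm_act].
by split=> [v|a]; rewrite -?tr_e -?tr_act -!trmx_mul ?comm_e ?comm_act.
Qed.

Lemma sqr0_not_End_division n (e : V -> 'M[K]_n) (act : Ar -> 'M[K]_n) S :
  isEndo e act S -> S != 0 -> S *m S = 0 -> ~ End_division e act.
Proof.
move=> endo_S S_neq0 SS /(_ S endo_S S_neq0)[g [_ Sg _]].
by move/eqP: S_neq0; apply; rewrite -[S]mulmx1 -Sg mulmxA SS mul0mx.
Qed.

Section Transpose.
Variable n : nat.
Variables (e e' : V -> 'M[K]_n) (act act' : Ar -> 'M[K]_n).
Hypotheses (tr_e : forall v, (e v)^T = e' v) (tr_act : forall a, (act a)^T = act' a).

Let isEndo_trV f : isEndo e' act' f -> isEndo e act f^T.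
Proof. by apply: isEndo_tr => [v|a]; rewrite -?tr_e -?tr_act trmxK. Qed.

Lemma indecomposable_tr : indecomposable e act -> indecomposable e' act'.
Proof.
case=> n_gt0 idem; split=> // f /isEndo_trV endo_f ff.
have := idem _ endo_f; rewrite -trmx_mul ff => /(_ erefl).
by case=> /(congr1 trmx); rewrite trmxK ?trmx0 ?trmx1; [left | right].
Qed.

Lemma End_division_tr : End_division e act -> End_division e' act'.
Proof.
move=> div f /isEndo_trV endo_f; rewrite -trmx_eq0 => /(div _ endo_f)[g [endo_g fg gf]].
exists g^T; split; first exact: isEndo_tr.
  by rewrite -[f]trmxK -trmx_mul gf trmx1.
by rewrite -[f]trmxK -trmx_mul fg trmx1.
Qed.

End Transpose.

End MatrixFacts.

Section StringMatrices.
Variables (K : fieldType) (V Ar : finType) (s t : Ar -> V) (R : Ar -> Ar -> bool).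
Local Open Scope ring_scope.
Implicit Types (w : seq (Ar * bool)) (y : V).

(* [smod_e] and [smod_act] with the dimension n.+1 decoupled from [size w]: a word and its
   letterwise inverse then give matrices of the same type. *)
Definition smx_e n y w v : 'M[K]_n.+1 :=
  \matrix_(i, j) ((i == j) && (svert s t y w i == v))%:R.

Definition smx_arrow w (a : Ar) (i j : nat) : bool :=
  ((j == i.+1) && (nth (a, true) w i == (a, true))) ||
  ((i == j.+1) && (nth (a, true) w j == (a, false))).

Definition smx_act n w a : 'M[K]_n.+1 := \matrix_(i, j) (smx_arrow w a i j)%:R.

Lemma smx_eMl n y w v (h : 'M[K]_n.+1) i j :
  (smx_e n y w v *m h) i j = (svert s t y w i == v)%:R * h i j.
Proof.
rewrite mxE (bigD1 i) //= big1 ?addr0 => [|m /negbTE]; rewrite mxE ?eqxx //.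
by rewrite eq_sym => ->; rewrite mul0r.
Qed.

Lemma smx_eMr n y w v (h : 'M[K]_n.+1) i j :
  (h *m smx_e n y w v) i j = h i j * (svert s t y w j == v)%:R.
Proof.
rewrite mxE (bigD1 j) //= big1 ?addr0 => [|m /negbTE]; rewrite mxE ?eqxx //.
by move=> ->; rewrite mulr0.
Qed.

Lemma smx_actMl n w a (h : 'M[K]_n.+1) (i j : 'I_n.+1) : size w = n ->
  (smx_act n w a *m h) i j =
    ((i < n)%N && (nth (a, true) w i == (a, true)))%:R * h (inord i.+1) j +
    ((0 < i)%N && (nth (a, true) w i.-1 == (a, false)))%:R * h (inord i.-1) j.
Proof.
move=> size_w; rewrite mxE.
set P1 := fun m => (m == i.+1) && (nth (a, true) w i == (a, true)).
set P2 := fun m => (i == m.+1 :> nat) && (nth (a, true) w m == (a, false)).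
rewrite (eq_bigr (fun m : 'I_n.+1 => (P1 m)%:R * h m j + (P2 m)%:R * h m j)); last first.
  move=> m _; rewrite mxE -mulrDl natr_orb //.
  by apply/negP => /andP[/andP[/eqP ? _] /andP[/eqP ? _]]; lia.
rewrite big_split /= (sum_natr_single (c := i.+1)) => [|m /andP[/eqP //]].
rewrite (sum_natr_single (c := i.-1)) => [|m /andP[/eqP ->//]].
rewrite /P1 /P2 eqxx /=; congr (_ * _ + _%:R * _).
by case: (nat_of_ord i) (ltn_ord i) => [|i'] //= lt_i; rewrite eqxx -ltnS ltnW.
Qed.

Lemma smx_actMr n w a (h : 'M[K]_n.+1) (i j : 'I_n.+1) : size w = n ->
  (h *m smx_act n w a) i j =
    ((0 < j)%N && (nth (a, true) w j.-1 == (a, true)))%:R * h i (inord j.-1) +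
    ((j < n)%N && (nth (a, true) w j == (a, false)))%:R * h i (inord j.+1).
Proof.
move=> size_w; rewrite mxE.
set P1 := fun m => (j == m.+1 :> nat) && (nth (a, true) w m == (a, true)).
set P2 := fun m => (m == j.+1) && (nth (a, true) w j == (a, false)).
rewrite (eq_bigr (fun m : 'I_n.+1 => (P1 m)%:R * h i m + (P2 m)%:R * h i m)); last first.
  move=> m _; rewrite mxE mulrC -mulrDl natr_orb //.
  by apply/negP => /andP[/andP[/eqP ? _] /andP[/eqP ? _]]; lia.
rewrite big_split /= (sum_natr_single (c := j.-1)) => [|m /andP[/eqP ->//]].
rewrite (sum_natr_single (c := j.+1)) => [|m /andP[/eqP //]].
rewrite /P1 /P2 eqxx /=; congr (_%:R * _ + _ * _).
by case: (nat_of_ord j) (ltn_ord j) => [|j'] //= lt_j; rewrite eqxx -ltnS ltnW.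
Qed.

Lemma smx_arrow_svert y w a i j : isString s t R y w -> (i <= size w)%N -> (j <= size w)%N ->
  smx_arrow w a i j -> svert s t y w i = s a /\ svert s t y w j = t a.
Proof.
move=> ws le_i le_j /orP[]/andP[/eqP Eij /eqP la].
  have lt_i : (i < size w)%N by lia.
  by rewrite Eij (svert_succ _ _ _ (a, true) lt_i) (svert_string (a, true) ws lt_i) la.
have lt_j : (j < size w)%N by lia.
by rewrite Eij (svert_succ _ _ _ (a, true) lt_j) (svert_string (a, true) ws lt_j) la.
Qed.

Lemma smx_arrow_rel y w a b i m j : isString s t R y w -> R b a ->
  (i <= size w)%N -> (j <= size w)%N -> ~~ (smx_arrow w a i m && smx_arrow w b m j).
Proof.
move=> ws Rba le_i le_j.
apply/negP => /andP[/orP[]/andP[/eqP Em /eqP la] /orP[]/andP[/eqP Ej /eqP lb]].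
- have lt_m : (i.+1 < size w)%N by lia.
  move: lb; rewrite Em (set_nth_default (a, true)) // => lb.
  by case/and4P: (string_ok_pair (a, true) ws lt_m) => _ _; rewrite la lb /= Rba.
- have Eji : j = i by lia.
  by move: lb; rewrite Eji => /(nth_letter_dir la).
- by have := nth_letter_dir la lb.
- have lt_j : (j.+1 < size w)%N by lia.
  move: la; rewrite Ej (set_nth_default (b, true)) // => la.
  by case/and4P: (string_ok_pair (b, true) ws lt_j) => _ _ _; rewrite la lb /= Rba.
Qed.

Lemma smx_isRep n y w : size w = n -> isString s t R y w ->
  isRep s t R (smx_e n y w) (smx_act n w).
Proof.
move=> size_w ws; split.
- move=> v; apply/matrixP => i j; rewrite smx_eMl mxE -natrM mulnb.
  by case: (svert s t y w i == v); case: (i == j).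
- move=> u v neq_uv; apply/matrixP => i j; rewrite smx_eMl !mxE -natrM mulnb.
  by case: eqP => //= ->; rewrite (negbTE neq_uv) andbF.
- apply/matrixP => i j; rewrite summxE !mxE.
  have [<-|neq_ij] := eqVneq i j; last by rewrite big1 // => v _; rewrite mxE (negbTE neq_ij).
  rewrite (bigD1 (svert s t y w i)) //= big1 ?addr0 => [|v /negbTE neq_v].
    by rewrite mxE !eqxx.
  by rewrite mxE eqxx eq_sym neq_v.
- move=> a; apply/matrixP => i j; rewrite smx_eMr smx_eMl mxE.
  have le_i : (i <= size w)%N by rewrite size_w -ltnS.
  have le_j : (j <= size w)%N by rewrite size_w -ltnS.
  case: (boolP (smx_arrow w a i j)) => [arr|_]; last by rewrite mulr0 mul0r.
  by case: (smx_arrow_svert ws le_i le_j arr) => -> ->; rewrite !eqxx mulr1 mul1r.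
- move=> b a Rba; apply/matrixP => i j; rewrite !mxE big1 // => m _.
  rewrite !mxE -natrM mulnb (negbTE (smx_arrow_rel m ws Rba _ _)) //.
  all: by rewrite size_w -ltnS.
Qed.

Lemma smx_endo_offdiag n y w (h : 'M[K]_n.+1) (i j : 'I_n.+1) :
  isEndo (smx_e n y w) (smx_act n w) h ->
  svert s t y w i != svert s t y w j -> h i j = 0.
Proof.
case=> comm_e _ neq_ij.
have := congr1 (fun M : 'M[K]_n.+1 => M i j) (comm_e (svert s t y w i)).
by rewrite /= smx_eMl smx_eMr eqxx mul1r eq_sym (negbTE neq_ij) mulr0.
Qed.

Lemma smx_endo_step_direct n y w (h : 'M[K]_n.+1) p q a :
  isString s t R y w -> size w = n -> isEndo (smx_e n y w) (smx_act n w) h ->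
  (p < n)%N -> (q < n)%N -> nth (a, true) w p = (a, true) -> nth (a, true) w q = (a, true) ->
  h (inord p.+1) (inord q.+1) = h (inord p) (inord q).
Proof.
move=> ws size_w [_ comm] lt_p lt_q wp wq.
have := congr1 (fun M : 'M[K]_n.+1 => M (inord p) (inord q.+1)) (comm a).
rewrite /= smx_actMl // smx_actMr // (inordK (ltnW lt_p)) (inordK (lt_q : (q.+1 < n.+1)%N)) /=.
have := string_after_direct ws wq; rewrite size_w => ->.
rewrite (string_before_direct ws) ?size_w // wp wq eqxx lt_p.
by rewrite !mul0r !addr0 !mul1r.
Qed.

End StringMatrices.

Section OppositeString.
Variables (K : fieldType) (V Ar : finType) (s t : Ar -> V).
Local Open Scope ring_scope.
Implicit Types (w : seq (Ar * bool)) (y : V).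

Lemma tr_smx_e n y w v : (smx_e K s t n y w v)^T = smx_e K s t n y w v.
Proof. by apply/matrixP => i j; rewrite !mxE eq_sym; case: eqP => // ->. Qed.

Lemma smx_e_inv_letters n y w v :
  smx_e K t s n y (map inv_letter w) v = smx_e K s t n y w v.
Proof. by apply/matrixP => i j; rewrite !mxE svert_inv_letters. Qed.

Lemma tr_smx_act n w a : size w = n ->
  (smx_act K n w a)^T = smx_act K n (map inv_letter w) a.
Proof.
move=> size_w; apply/matrixP => i j; rewrite !mxE /smx_arrow orbC.
have nth_inv k e : (k < n)%N ->
    (nth (a, true) (map inv_letter w) k == (a, e)) = (nth (a, true) w k == (a, ~~ e)).
  by move=> lt_k; rewrite (nth_map (a, true)) ?size_w // inv_letter_eq.
have lt_i := ltn_ord i; have lt_j := ltn_ord j.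
case: (eqVneq (j : nat) i.+1) => [ji|_]; case: (eqVneq (i : nat) j.+1) => [ij|_] //=.
- by lia.
- by rewrite nth_inv ?orbF //; lia.
- by rewrite nth_inv //; lia.
Qed.

Lemma isEndo_smx_inv_letters n y w h : size w = n ->
  isEndo (smx_e K s t n y w) (smx_act K n w) h ->
  isEndo (smx_e K t s n y (map inv_letter w)) (smx_act K n (map inv_letter w)) h^T.
Proof.
by move=> size_w; apply: isEndo_tr => [v|a]; rewrite ?tr_smx_e ?smx_e_inv_letters ?tr_smx_act.
Qed.

Section StringModuleOpposite.
Variables (n : nat) (y : V) (w : seq (Ar * bool)).
Hypothesis size_w : size w = n.

Let tr_e v : (smx_e K t s n y (map inv_letter w) v)^T = smx_e K s t n y w v.
Proof. by rewrite smx_e_inv_letters tr_smx_e. Qed.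

Let tr_act a : (smx_act K n (map inv_letter w) a)^T = smx_act K n w a.
Proof. by rewrite -tr_smx_act ?trmxK. Qed.

Lemma indecomposable_opposite :
  indecomposable (smx_e K t s n y (map inv_letter w)) (smx_act K n (map inv_letter w)) ->
  indecomposable (smx_e K s t n y w) (smx_act K n w).
Proof. exact: indecomposable_tr. Qed.

Lemma End_division_opposite :
  End_division (smx_e K s t n y w) (smx_act K n w) ->
  End_division (smx_e K t s n y (map inv_letter w)) (smx_act K n (map inv_letter w)).
Proof. by apply: End_division_tr => [v|a]; rewrite -?tr_e -?tr_act trmxK. Qed.

End StringModuleOpposite.

End OppositeString.

Section StringEndomorphisms.
Variables (K : fieldType) (V Ar : finType) (s t : Ar -> V) (R : Ar -> Ar -> bool).
Local Open Scope ring_scope.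
Variables (n : nat) (y : V) (w : seq (Ar * bool)).
Hypotheses (ws : isString s t R y w) (size_w : size w = n).

Lemma smx_endo_step (h : 'M[K]_n.+1) p q (x : Ar * bool) :
  isEndo (smx_e K s t n y w) (smx_act K n w) h -> (p < n)%N -> (q < n)%N ->
  nth x w p = nth x w q -> h (inord p.+1) (inord q.+1) = h (inord p) (inord q).
Proof.
move=> endo_h lt_p lt_q wpq.
have nth_w b k : (k < n)%N -> nth (b, true) w k = nth x w k.
  by move=> lt_k; apply: set_nth_default; rewrite size_w.
case E: (nth x w p) wpq => [b e] wqp.
have wp : nth (b, true) w p = (b, e) by rewrite nth_w.
have wq : nth (b, true) w q = (b, e) by rewrite nth_w.
case: e {E wqp} wp wq => wp wq; first exact: smx_endo_step_direct ws size_w endo_h lt_p lt_q wp wq.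
have size_w' : size (map inv_letter w) = n by rewrite size_map.
have := smx_endo_step_direct (isString_inv_letters ws) size_w'
  (isEndo_smx_inv_letters size_w endo_h) lt_q lt_p (a := b).
by rewrite !(nth_map (b, true)) ?size_w // wp wq !mxE; apply.
Qed.

Lemma smx_endo_diag (h : 'M[K]_n.+1) p :
  isEndo (smx_e K s t n y w) (smx_act K n w) h -> (p <= n)%N ->
  h (inord p) (inord p) = h ord0 ord0.
Proof.
move=> endo_h; elim: p => [|p IHp] lt_p.
  by congr (h _ _); apply/val_inj; rewrite /= inordK.
have x : Ar * bool by case: w size_w lt_p => [<-|x _] //.
by rewrite (smx_endo_step (x := x) endo_h) ?IHp // ltnW.
Qed.

Lemma smx_endo_scalar (h : 'M[K]_n.+1) :
  {in [pred p | (p <= n)%N] &, injective (svert s t y w)} ->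
  isEndo (smx_e K s t n y w) (smx_act K n w) h -> h = (h ord0 ord0)%:M.
Proof.
move=> svert_inj endo_h; apply/matrixP => i j; rewrite mxE.
have [<-|neq_ij] := eqVneq i j.
  by rewrite mulr1n -(smx_endo_diag endo_h (ltn_ord i)) inord_val.
rewrite mulr0n (smx_endo_offdiag endo_h) //; apply: contra neq_ij => /eqP/svert_inj eq_ij.
by apply/eqP/val_inj/eq_ij; rewrite inE -ltnS.
Qed.

End StringEndomorphisms.

Section ShiftedClosedString.
Variables (K : fieldType) (V Ar : finType) (s t : Ar -> V) (R : Ar -> Ar -> bool).
Variables (y : V) (c : seq (Ar * bool)) (m n : nat) (z : Ar * bool).
Local Notation d := (size c).
Local Notation w := (c ++ take m c).
Hypotheses (lt_md : m < d) (size_n : d + m = n) (ws : isString s t R y w).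
Hypotheses (c_closed : svert s t y c d = y)
  (svert_c_inj : {in [pred p | p < d] &, injective (svert s t y c)}).
Hypotheses (dir_last : (nth z c d.-1).2) (dir_m : (nth z c m).2).

Let size_w : size w = n.
Proof. by rewrite size_cat size_takel // ltnW. Qed.

Let nth_w_lt p x : p < d -> nth x w p = nth x c p.
Proof. by move=> lt_p; rewrite nth_cat lt_p. Qed.

Let nth_w_shift p x : p < m -> nth x w (p + d) = nth x w p.
Proof.
move=> lt_p; rewrite [RHS]nth_w_lt; last by lia.
by rewrite nth_cat ltnNge leq_addl /= addnK nth_take.
Qed.

Let svert_w p : p <= n -> svert s t y w p = svert s t y c (p %% d).
Proof.
move=> le_p; case: (ltnP p d) => [lt_p|le_dp]; first by rewrite svert_cat ?modn_small // ltnW.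
rewrite -(subnKC le_dp) svert_catr ?c_closed ?svert_take ?size_takel ?modnDl ?modn_small //; lia.
Qed.

Let svert_w_shift p : p <= m -> svert s t y w (p + d) = svert s t y w p.
Proof. by move=> le_p; rewrite !svert_w ?modnDr //; lia. Qed.

Let svert_w_eq p q : p <= n -> q <= n -> svert s t y w p = svert s t y w q ->
  p = q \/ p = q + d \/ q = p + d.
Proof.
move=> le_p le_q; have d_gt0 : 0 < d by lia.
rewrite !svert_w // => /svert_c_inj; rewrite !inE !ltn_pmod // => /(_ isT isT).
have mod_ge r : d <= r -> r <= n -> r %% d = r - d.
  by move=> le_dr le_r; rewrite -{1}(subnKC le_dr) modnDl modn_small //; lia.
case: (ltnP p d) => lt_p; case: (ltnP q d) => lt_q;
  rewrite ?(modn_small lt_p) ?(modn_small lt_q) ?(mod_ge p) ?(mod_ge q) //; lia.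
Qed.

Let nth_w_dir p x : p < d -> (nth z c p).2 -> nth x w p != (x.1, false).
Proof.
move=> lt_p dir_p; rewrite nth_w_lt // (set_nth_default z) //.
by apply: contraTneq dir_p => ->.
Qed.

Let inord_pred (k : 'I_n.+1) : (inord k.-1 : 'I_n.+1) = k.-1 :> nat.
Proof. by rewrite inordK // ltnS (leq_trans (leq_pred k)) // -ltnS. Qed.

Let shift_direct a (i j : 'I_n.+1) :
  (i < n) && (nth (a, true) w i == (a, true)) &&
    (((inord i.+1 : 'I_n.+1) <= m) && (j == (inord i.+1 : 'I_n.+1) + d :> nat)) =
  (0 < j) && (nth (a, true) w j.-1 == (a, true)) &&
    ((i <= m) && ((inord j.-1 : 'I_n.+1) == i + d :> nat)).
Proof.
have le_j : j <= n := ltn_ord j; rewrite -[LHS]andbA -[RHS]andbA inord_pred.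
case: (ltnP i n) => [lt_in|le_ni]; last first.
  by apply/esym/and4P => -[_ _ le_im _]; lia.
rewrite (inordK (lt_in : i.+1 < n.+1)).
apply/and4P/and4P => -[_ wi lt_im /eqP Ej].
  by split; rewrite ?Ej -?addSnnS ?nth_w_shift //; lia.
have lt_im' : i < m by lia.
by split; rewrite -?(nth_w_shift _ lt_im') -?Ej ?prednK //; lia.
Qed.

Let shift_inverse a (i j : 'I_n.+1) :
  (0 < i) && (nth (a, true) w i.-1 == (a, false)) &&
    (((inord i.-1 : 'I_n.+1) <= m) && (j == (inord i.-1 : 'I_n.+1) + d :> nat)) =
  (j < n) && (nth (a, true) w j == (a, false)) &&
    ((i <= m) && ((inord j.+1 : 'I_n.+1) == i + d :> nat)).
Proof.
have le_j : j <= n := ltn_ord j; rewrite -[LHS]andbA -[RHS]andbA inord_pred.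
case: (ltnP j n) => [lt_jn|le_nj]; last first.
  apply/and4P => -[_ wi le_im /eqP Ej]; have im : i.-1 = m by lia.
  by move: wi; rewrite im; apply/negP/nth_w_dir.
rewrite (inordK (lt_jn : j.+1 < n.+1)).
apply/and4P/and4P => -[i_gt0 wi le_im /eqP Ej].
  have lt_im : i.-1 < m.
    rewrite ltn_neqAle le_im andbT; apply: contraTneq wi => ->.
    exact: nth_w_dir.
  by split; rewrite ?Ej ?nth_w_shift //; lia.
have i_gt0' : 0 < i.
  rewrite lt0n; apply: contraTneq wi => i0; have -> : (j : nat) = d.-1 by lia.
  by apply: nth_w_dir dir_last; lia.
have Ej' : (j : nat) = i.-1 + d by lia.
by move: wi; rewrite Ej' nth_w_shift => [wi|]; [split | ]; rewrite ?Ej' //; lia.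
Qed.

Local Open Scope ring_scope.

(* b_i |-> b_(i+d) for i <= m: the factor string b_0 ... b_m of M(w) reappears as the
   substring b_d ... b_(d+m). *)
Definition shift_mx : 'M[K]_n.+1 :=
  \matrix_(i, j) (((i : nat) <= m)%N && (j == (i + d)%N :> nat)%N)%:R.

Lemma shift_mx_sq : shift_mx *m shift_mx = 0.
Proof.
apply/matrixP => i j; rewrite !mxE big1 // => k _; rewrite !mxE -natrM mulnb.
by case: (boolP (_ && _)) => //= /andP[/andP[_ /eqP Ek] /andP[le_k _]]; lia.
Qed.

Lemma shift_mx_neq0 : shift_mx != 0.
Proof.
apply/negP => /eqP/matrixP/(_ ord0 (inord d)); rewrite !mxE inordK; last by lia.
by rewrite leq0n eqxx => /eqP; rewrite oner_eq0.
Qed.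

Lemma isEndo_shift_mx : isEndo (smx_e K s t n y w) (smx_act K n w) shift_mx.
Proof.
split=> [v|a]; apply/matrixP => i j.
  rewrite smx_eMl smx_eMr mxE; case: (boolP (_ && _)) => [/andP[le_i /eqP ->]|_].
    by rewrite svert_w_shift // mulr1 mul1r.
  by rewrite mulr0 mul0r.
rewrite smx_actMl // smx_actMr // !mxE -!natrM !mulnb.
by rewrite shift_direct shift_inverse.
Qed.

Section Endomorphism.
Variable h : 'M[K]_n.+1.
Hypothesis endo_h : isEndo (smx_e K s t n y w) (smx_act K n w) h.

Let inord0 : inord 0 = ord0 :> 'I_n.+1 := inord_val ord0.

Let shift_upper p : (p <= m)%N -> h (inord p) (inord (p + d)) = h ord0 (inord d).
Proof.
elim: p => [|p IHp] lt_p; first by rewrite inord0.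
have wp : nth z w p = nth z w (p + d) by rewrite nth_w_shift.
by rewrite addSn (smx_endo_step ws size_w endo_h _ _ wp) ?IHp //; lia.
Qed.

Let shift_lower_base : h (inord d) ord0 = 0.
Proof.
have lt_last : (d.-1 < d)%N by lia.
set a := (nth z c d.-1).1.
have c_last : nth z c d.-1 = (a, true) by rewrite /a; case: (nth z c d.-1) dir_last => ? [].
have w_last : nth (a, true) w d.-1 = (a, true) by rewrite nth_w_lt // (set_nth_default z).
have w_first : (nth (a, true) w 0 == (a, false)) = false.
  have cs : isString s t R y c by have := isString_take (size c) ws; rewrite take_size_cat.
  have := closed_string_ninv z cs svert_c_inj (leq_ltn_trans (leq0n _) lt_md).
  rewrite nth_w_lt ?(set_nth_default z) //; try lia.
  by apply: contraNF => /eqP ->; rewrite c_last.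
have := congr1 (fun M : 'M[K]_n.+1 => M (inord d.-1) ord0) (endo_h.2 a).
rewrite /= smx_actMl // smx_actMr // inordK; last by lia.
rewrite (string_before_direct ws) ?size_w ?w_last ?w_first ?eqxx //; last by lia.
have lt_last_n : (d.-1 < n)%N by lia.
rewrite andbT lt_last_n prednK; last by lia.
by rewrite andbF /= !mul0r !addr0 mul1r.
Qed.

Let shift_lower p : (p <= m)%N -> h (inord (p + d)) (inord p) = 0.
Proof.
elim: p => [|p IHp] lt_p; first by rewrite inord0 shift_lower_base.
have wp : nth z w (p + d) = nth z w p by rewrite nth_w_shift.
by rewrite addSn (smx_endo_step ws size_w endo_h _ _ wp) ?IHp //; lia.
Qed.

Lemma shift_endo_decomposition : h = (h ord0 ord0)%:M + h ord0 (inord d) *: shift_mx.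
Proof.
apply/matrixP => i j; rewrite !mxE.
have le_i : (i <= n)%N := ltn_ord i; have le_j : (j <= n)%N := ltn_ord j.
have [eq_v|neq_v] := eqVneq (svert s t y w i) (svert s t y w j); last first.
  have -> : (i == j) = false by apply: contraNF neq_v => /eqP ->.
  have -> : ((i <= m)%N && (j == (i + d)%N :> nat)) = false.
    by apply: contraNF neq_v => /andP[le_im /eqP ->]; rewrite svert_w_shift.
  by rewrite (smx_endo_offdiag endo_h neq_v) mulr0 addr0.
case: (svert_w_eq le_i le_j eq_v) => [/val_inj <-|[Eij|Eji]].
- rewrite eqxx mulr1n (_ : (i == (i + d)%N :> nat) = false) ?andbF ?mulr0 ?addr0; last by lia.
  by rewrite -(smx_endo_diag ws size_w endo_h le_i) inord_val.
- have ne_ij : (i == j) = false by apply/negbTE/eqP => eq_ij; move: Eij; rewrite eq_ij; lia.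
  have ne_j : (j == (i + d)%N :> nat) = false by apply/negbTE/eqP; lia.
  have le_jm : (j <= m)%N by lia.
  rewrite ne_ij ne_j andbF mulr0 mulr0n addr0.
  by have := shift_lower le_jm; rewrite -Eij !inord_val.
- have ne_ij : (i == j) = false by apply/negbTE/eqP => eq_ij; move: Eji; rewrite eq_ij; lia.
  have le_im : (i <= m)%N by lia.
  rewrite ne_ij le_im Eji eqxx mulr0n mulr1 add0r.
  by have := shift_upper le_im; rewrite -Eji !inord_val.
Qed.

End Endomorphism.

Lemma shift_string_indecomposable : indecomposable (smx_e K s t n y w) (smx_act K n w).
Proof.
split=> [|h endo_h]; first exact: ltn0Sn.
rewrite (shift_endo_decomposition endo_h).
move: (h ord0 ord0) (h ord0 (inord d)) => a b.
case/(idem_scalar_add_sqr0 shift_mx_sq shift_mx_neq0) => -> [] ->.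
  by left; rewrite scale0r addr0; apply/matrixP => i j; rewrite !mxE mul0rn.
by right; rewrite scale0r addr0.
Qed.

Lemma shift_string_not_End_division : ~ End_division (smx_e K s t n y w) (smx_act K n w).
Proof. exact: sqr0_not_End_division isEndo_shift_mx shift_mx_neq0 shift_mx_sq. Qed.

End ShiftedClosedString.

Lemma brick_gentle_shifted_closed_string (K : fieldType) (V Ar : finType) (s t : Ar -> V) R
    y c m (z : Ar * bool) :
  brick_gentle K s t R -> m < size c -> isString s t R y (c ++ take m c) ->
  svert s t y c (size c) = y -> {in [pred p | p < size c] &, injective (svert s t y c)} ->
  (nth z c (size c).-1).2 = (nth z c m).2 -> False.
Proof.
move=> [_ bg] lt_m ws c_closed c_inj same_dir.
pose n := size c + m.
have size_w : size (c ++ take m c) = n by rewrite size_cat size_takel // ltnW.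
have bg_w := bg n.+1 _ _ (smx_isRep K size_w ws).
case dir_last: (nth z c (size c).-1).2.
  have dir_m : (nth z c m).2 by rewrite -same_dir.
  exact: (shift_string_not_End_division lt_m erefl ws c_closed dir_last dir_m
           (bg_w (shift_string_indecomposable K lt_m erefl ws c_closed c_inj dir_last dir_m))).
(* In the opposite quiver the last letter is direct and string modules are transposed. *)
pose c' := map inv_letter c.
have map_w : c' ++ take m c' = map inv_letter (c ++ take m c) by rewrite map_cat map_take.
have lt_m' : m < size c' by rewrite size_map.
have size_n' : size c' + m = n by rewrite size_map.
have ws' : isString t s (fun b a => R a b) y (c' ++ take m c').
  by rewrite map_w; apply: isString_inv_letters.
have c'_closed : svert t s y c' (size c') = y by rewrite svert_inv_letters size_map.
have c'_inj : {in [pred p | p < size c'] &, injective (svert t s y c')}.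
  by move=> p q; rewrite size_map !svert_inv_letters; apply: c_inj.
have nth_c' k : k < size c -> (nth (inv_letter z) c' k).2 = ~~ (nth z c k).2.
  by move=> lt_k; rewrite (nth_map z).
have dir_last' : (nth (inv_letter z) c' (size c').-1).2.
  by rewrite size_map nth_c' ?dir_last //; lia.
have dir_m' : (nth (inv_letter z) c' m).2 by rewrite nth_c' // -same_dir dir_last.
apply: (shift_string_not_End_division lt_m' size_n' ws' c'_closed dir_last' dir_m').
rewrite map_w; apply: End_division_opposite => //; apply: bg_w.
apply: indecomposable_opposite => //; rewrite -map_w.
exact: shift_string_indecomposable lt_m' size_n' ws' c'_closed c'_inj dir_last' dir_m'.
Qed.

Lemma brick_gentle_no_closed_string (K : fieldType) (V Ar : finType) (s t : Ar -> V) R y c :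
  brick_gentle K s t R -> isString s t R y c -> 0 < size c ->
  svert s t y c (size c) = y -> {in [pred p | p < size c] &, injective (svert s t y c)} ->
  False.
Proof.
move=> bg cs c_gt0 c_closed c_inj.
have z : Ar * bool by case: (c) c_gt0 => [|z c'].
(* When the first and last letters of c point in opposite directions, continuing c by its
   own letters cannot create a relation. *)
pose m := if (nth z c 0).2 == (nth z c (size c).-1).2 then 0 else (size c).-1.
have lt_m : m < size c by rewrite /m; case: ifP => _ //; lia.
have ws : isString s t R y (c ++ take m c).
  apply: (isString_cat_take (z := z) cs lt_m); rewrite /m.
  case: ifP => [_|dir_neq]; [by left | right].
  apply: ok_pair_dir_neq; last by rewrite eq_sym dir_neq.
    have lt_last : (size c).-1 < size c by lia.
    by rewrite -(svert_succ s t y z) ?prednK // c_closed -(svert_string z cs c_gt0).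
  exact: closed_string_ninv cs c_inj c_gt0.
apply: (brick_gentle_shifted_closed_string (z := z) bg lt_m ws c_closed c_inj).
by rewrite /m; case: ifP => [/eqP ->|_].
Qed.

Lemma brick_gentle_svert_inj (K : fieldType) (V Ar : finType) (s t : Ar -> V) R y w :
  brick_gentle K s t R -> isString s t R y w ->
  {in [pred p | p <= size w] &, injective (svert s t y w)}.
Proof.
move=> bg ws.
suff no_loop d p : p + d <= size w -> svert s t y w p = svert s t y w (p + d) -> d = 0.
  move=> p q; rewrite !inE => le_p le_q eq_pq.
  case: (ltngtP p q) => [lt_pq|lt_qp|//].
    by have := no_loop (q - p) p; rewrite (subnKC (ltnW lt_pq)) => /(_ le_q eq_pq); lia.
  by have := no_loop (p - q) q; rewrite (subnKC (ltnW lt_qp)) => /(_ le_p (esym eq_pq)); lia.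
elim/ltn_ind: d p => d IHd p le_pd closed; case: (posnP d) => // d_gt0; exfalso.
pose c := take d (drop p w).
have size_c : size c = d by rewrite size_takel // size_drop; lia.
have svert_c r : r <= d -> svert s t (svert s t y w p) c r = svert s t y w (p + r).
  by move=> le_r; rewrite svert_take // svert_drop //; lia.
have cs : isString s t R (svert s t y w p) c by apply/isString_take/isString_drop; lia.
apply: (brick_gentle_no_closed_string bg cs); rewrite size_c //.
  by rewrite svert_c // closed.
move=> p' q'; rewrite !inE => lt_p' lt_q'.
rewrite (svert_c _ (ltnW lt_p')) (svert_c _ (ltnW lt_q')) => eq_v.
case: (ltngtP p' q') => [lt_pq|lt_qp|//].
  have := IHd (q' - p') _ (p + p'); rewrite -addnA (subnKC (ltnW lt_pq)).
  by move=> /(_ _ _ eq_v); lia.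
have := IHd (p' - q') _ (p + q'); rewrite -addnA (subnKC (ltnW lt_qp)).
by move=> /(_ _ _ (esym eq_v)); lia.
Qed.

Section DoubleQuiver.
Variables (V Ar : finType) (s t : Ar -> V) (R : Ar -> Ar -> bool).

Lemma specialize_str_letter (l : Ar * bool) e : specialize (str_letter l e) = l.
Proof. by case: l => a []; case: e. Qed.

Lemma specialize_str (w : seq (Ar * bool)) (D : (size w).-tuple bool) :
  map (@specialize Ar) (str D) = w.
Proof.
rewrite /str -map_comp (eq_map (g := fst)) => [|[l e] /=]; last exact: specialize_str_letter.
by rewrite -/(unzip1 _) unzip1_zip // size_tuple.
Qed.

Lemma lsrc_pi l : lsrc (piS s t) (piT s t) l = lsrc s t (specialize l).
Proof. by case: l => [[a|a] []]. Qed.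

Lemma ltgt_pi l : ltgt (piS s t) (piT s t) l = ltgt s t (specialize l).
Proof. by case: l => [[a|a] []]. Qed.

Lemma ok_pair_pi l1 l2 : ok_pair s t R (specialize l1) (specialize l2) ->
  ok_pair (piS s t) (piT s t) (piR R) l1 l2.
Proof.
rewrite /ok_pair !lsrc_pi !ltgt_pi => /and4P[-> ninv r1 r2] /=.
by case: l1 l2 ninv r1 r2 => [[a|a] [] [[b|b] []]]; rewrite /specialize /= ?andbF ?andbT.
Qed.

Lemma isString_pi y u : isString s t R y (map (@specialize Ar) u) ->
  isString (piS s t) (piT s t) (piR R) y u.
Proof.
case: u => [|l u] //; rewrite /isString /= lsrc_pi path_map => /andP[-> pu].
by apply: sub_path pu => l1 l2 /ok_pair_pi.
Qed.

Lemma svert_pi y u p :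
  svert (piS s t) (piT s t) y u p = svert s t y (map (@specialize Ar) u) p.
Proof.
by rewrite /svert -map_comp; congr (nth _ (_ :: _) _); apply: eq_map => l /=; rewrite ltgt_pi.
Qed.

End DoubleQuiver.

Theorem lemma6p5 (k : fieldType) (V Ar : finType) (s t : Ar -> V)
    (R : Ar -> Ar -> bool) :
  brick_gentle k s t R ->
  forall (x0 : V) (w : seq (Ar * bool)) (D : (size w).-tuple bool),
    isString s t R x0 w ->
    let u := str D in
    [/\ isString (piS s t) (piT s t) (piR R) x0 u,
        map (@specialize Ar) u = w,
        isRep (piS s t) (piT s t) (piR R) (smod_e k (piS s t) (piT s t) x0 u)
              (smod_act k x0 u)
      & isBrick (smod_e k (piS s t) (piT s t) x0 u) (smod_act k x0 u)].
Proof.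
move=> bg x0 w D ws u.
have spec_u : map (@specialize Ar) u = w := specialize_str D.
have us : isString (piS s t) (piT s t) (piR R) x0 u by apply: isString_pi; rewrite spec_u.
split=> //; first exact: smx_isRep.
move=> f endo_f; exists (f ord0 ord0); apply: (smx_endo_scalar us erefl _ endo_f).
move=> p q; rewrite !inE !svert_pi spec_u -(size_map (@specialize Ar)) spec_u.
exact: brick_gentle_svert_inj bg ws p q.
Qed.
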